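(* Let $(P,\mathit{dist})$ be a finite metric space of doubling dimension $d$, let $S\subseteq P$ be non-empty with $n=|S|$, let $t\ge 1$ be an integer (possibly depending on $n$), and let $c=2(4e)^d$. Assume $n\ge c+1$. Then Algorithm $\mathrm{SparseSepAnn}(S,n,d,t)$ has expected running time $O(cn)$, and it returns a point $p\in S$ and a real number $R>0$ such that (1) $|\mathit{ball}_S(p,R)|\ge n/c$, (2) $|\mathit{annulus}_S(p,R,(1+1/t)R)|\le n/t$, and (3) $|S\setminus \mathit{ball}_S(p,(1+1/t)R)|\ge n/2$.
   Context: For $X\subseteq P$, $p\in P$ and reals $R'\ge R\ge 0$: $\mathit{ball}_X(p,R)=\{x\in X:\mathit{dist}(p,x)\le R\}$ and $\mathit{annulus}_X(p,R,R')=\{x\in X: R<\mathit{dist}(p,x)\le R'\}$. The doubling dimension of $(P,\mathit{dist})$ is $\log_2\lambda$, where $\lambda$ is the smallest integer such that for every $p\in P$ and real $R>0$, $\mathit{ball}_P(p,R)$ is covered by at most $\lambda$ balls $\mathit{ball}_P(q,R/2)$ with $q\in P$. Distances are obtained from an oracle in $O(1)$ time. Algorithm $\mathrm{SepAnn}(S,n,d,\mu,c)$ (for reals $\mu\ge1$, $c>1$): repeat: choose $p$ uniformly at random from $S$; compute $R_p=\min\{r>0:|\mathit{ball}_S(p,r)|\ge n/c\}$ (by expected-linear-time selection of the $\lceil n/c\rceil$-th smallest distance from $p$ to the points of $S$, including $p$); until $|\mathit{ball}_S(p,\mu R_p)|\le n/2$ (checked by scanning the distances); return $p$ and $R'=R_p$.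 Algorithm $\mathrm{SparseSepAnn}(S,n,d,t)$: set $c=2(4e)^d$; let $p\in S$ and $R'>0$ be the output of $\mathrm{SepAnn}(S,n,d,e,c)$; for $i=0,\dots,t$ let $R_i=(1+1/t)^iR'$ and for $i=1,\dots,t$ let $A_i=\mathit{annulus}_S(p,R_{i-1},R_i)$; repeat: choose $i$ uniformly at random from $\{1,\dots,t\}$ and compute $s=|A_i|$ by scanning the distances from $p$; until $s\le n/t$; return $p$ and $R=R_{i-1}$. *)

From HB Require Import structures.
From mathcomp Require Import all_boot all_order all_algebra.
From mathcomp Require Import reals sequences exp.
Set Implicit Arguments. Unset Strict Implicit. Unset Printing Implicit Defensive.
Import Order.TTheory GRing.Theory Num.Theory.
Local Open Scope ring_scope.

Section Metric.
Variables (R : realType) (P : finType) (dist : P -> P -> R).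

Definition is_metric : Prop :=
  [/\ forall x y, 0 <= dist x y,
      forall x y, dist x y = 0 <-> x = y,
      forall x y, dist x y = dist y x &
      forall x y z, dist x z <= dist x y + dist y z].

Definition ball (X : {set P}) (p : P) (r : R) : {set P} :=
  [set x in X | dist p x <= r].

Definition annulus (X : {set P}) (p : P) (r r' : R) : {set P} :=
  [set x in X | (r < dist p x) && (dist p x <= r')].

Definition doubling_ok (lam : nat) : Prop :=
  forall (p : P) (r : R), 0 < r ->
    exists Q : {set P}, (#|Q| <= lam)%N /\
      ball [set: P] p r \subset \bigcup_(q in Q) ball [set: P] q (r / 2).

Definition doubling_constant (lam : nat) : Prop :=
  doubling_ok lam /\ forall l, doubling_ok l -> (lam <= l)%N.

Definition doubling_dim (lam : nat) : R := ln (lam%:R) / ln 2.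

End Metric.

(* A tiny language of randomized programs with a cost counter.        *)
(*   Tick k m    : spend k elementary steps, then run m               *)
(*   Unif m f    : draw i uniformly from 'I_m.+1, then run f i        *)
(*   Fail        : the fuel used to unfold loops ran out              *)
(* Loops "repeat ... until" are unfolded with a fuel k; the semantics  *)
(* of the real (unbounded) algorithm is the limit k -> +oo, which is   *)
(* monotone.  Expected cost of the unbounded run = sup_k of the        *)
(* expected cost of the k-truncated run.                              *)
Inductive prog (A : Type) : Type :=
| Ret of A
| Tick of nat & prog A
| Unif (m : nat) of ('I_m.+1 -> prog A)
| Fail.
Arguments Ret {A}. Arguments Tick {A}. Arguments Unif {A}. Arguments Fail {A}.

Fixpoint bind (A B : Type) (m : prog A) (f : A -> prog B) : prog B :=
  match m with
  | Ret a => f a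
  | Tick k m' => Tick k (bind m' f)
  | Unif n g => Unif n (fun i => bind (g i) f)
  | Fail => Fail
  end.

(* uniform choice from a (duplicate-free) nonempty sequence *)
Definition unif_seq (X A : Type) (s : seq X) (f : X -> prog A) : prog A :=
  match s with
  | [::] => Fail
  | x0 :: _ => Unif (size s).-1 (fun i => f (nth x0 s i))
  end.

Fixpoint loop (A : Type) (fuel : nat) (body : prog (option A)) : prog A :=
  match fuel with
  | 0 => Fail
  | k.+1 => bind body (fun o => if o is Some a then Ret a else loop k body)
  end.

Section Semantics.
Variable R : realType.

(* probability that the program terminates (within fuel) with an output in E *)
Fixpoint pr (A : Type) (m : prog A) (E : A -> bool) : R :=
  match m with
  | Ret a => (E a)%:R
  | Tick _ m' => pr m' E
  | Unif n g => (n.+1)%:R^-1 * \sum_(i < n.+1) pr (g i) E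
  | Fail => 0
  end.

Fixpoint ecost (A : Type) (m : prog A) : R :=
  match m with
  | Ret _ => 0
  | Tick k m' => k%:R + ecost m'
  | Unif n g => (n.+1)%:R^-1 * \sum_(i < n.+1) ecost (g i)
  | Fail => 0
  end.
End Semantics.
Arguments pr {R A}.
Arguments ecost {R A}.

(* The algorithms.  Cost model (real RAM, distance oracle O(1)):      *)
(*  - SepAnn iteration: sample p (1), compute the n distances from p  *)
(*    (n), selection of the ceil(n/c)-th smallest distance (charged   *)
(*    its expected linear cost n), scan for |ball(p, mu R_p)| (n).    *)
(*  - SparseSepAnn iteration: sample i (1), scan distances from p (n).*)
(*  - one initial step for computing c.                               *)
Section Algorithms.
Variables (R : realType) (P : finType) (dist : P -> P -> R).

(* R_p = min { r > 0 : |ball_S(p,r)| >= n/c } (attained at a distance) *)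
Definition sep_radius (S : {set P}) (n : nat) (c : R) (p : P) : R :=
  head 0 [seq r <- sort <=%R [seq dist p x | x <- enum S]
         | (0 < r) && (n%:R / c <= #|ball dist S p r|%:R)].

Definition SepAnn_body (S : {set P}) (n : nat) (mu c : R)
  : prog (option (P * R)) :=
  unif_seq (enum S) (fun p =>
    let Rp := sep_radius S n c p in
    Tick (3 * n).+1
      (Ret (if #|ball dist S p (mu * Rp)|%:R <= n%:R / 2 :> R
            then Some (p, Rp) else None))).

Definition SepAnn (fuel : nat) (S : {set P}) (n : nat) (mu c : R)
  : prog (P * R) := loop fuel (SepAnn_body S n mu c).

(* R_i = (1 + 1/t)^i R' ; A_i = annulus_S(p, R_{i-1}, R_i), i in 1..t *)
Definition Rseq (t : nat) (R' : R) (i : nat) : R := (1 + t%:R^-1) ^+ i * R'.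

Definition SparseSepAnn_body (S : {set P}) (n t : nat) (p : P) (R' : R)
  : prog (option (P * R)) :=
  (* choose j uniformly in 'I_t, i.e. i = j+1 uniformly in {1,..,t} *)
  Unif t.-1 (fun j : 'I_t.-1.+1 =>
    let i := (val j).+1 in
    Tick n.+1
      (Ret (if #|annulus dist S p (Rseq t R' i.-1) (Rseq t R' i)|%:R
               <= n%:R / t%:R :> R
            then Some (p, Rseq t R' i.-1) else None))).

Definition SparseSepAnn (fuel : nat) (S : {set P}) (n : nat) (d : R) (t : nat)
  : prog (P * R) :=
  let c := 2 * (4 * expR 1) `^ d in
  Tick 1 (bind (SepAnn fuel S n (expR 1) c) (fun pR' =>
    loop fuel (SparseSepAnn_body S n t pR'.1 pR'.2))).

End Algorithms.

From HB Require Import structures.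
From mathcomp Require Import all_boot all_order all_algebra.
From mathcomp Require Import reals sequences exp.
From mathcomp Require Import ring lra zify.
Import Order.TTheory GRing.Theory Num.Theory.
Set Implicit Arguments. Unset Strict Implicit.
Local Open Scope ring_scope.

(* Let R_p be the radius at which ball_S(p, R_p) first holds n/c points, and
   call p good if |ball_S(p, e R_p)| <= n/2.  Cover ball_S(p, e R_p) by
   lambda^3 balls of radius e R_p / 8.  Each point x of a ball holding at least
   n/c points has R_x <= e R_p / 4 < R_p, and the other balls hold fewer than
   lambda^3 n/c <= 4n/9 points together.  So a point is good as soon as fewer
   than n/18 points have a smaller radius.  Hence at least n/18 points are
   good and SepAnn stops after at most 18 rounds in expectation.
   For SparseSepAnn the t annuli A_i are disjoint and contained in
   ball_S(p, e R'), as (1 + 1/t)^t <= e; they hold at most n/2 points, so at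
   most half of them hold more than n/t points and each round stops with
   probability at least 1/2.  The output guarantees are the stopping tests. *)

Section ProgramLogic.
Variable R : realType.

Fixpoint all_outputs (A : Type) (Q : A -> Prop) (m : prog A) : Prop :=
  match m with
  | Ret a => Q a
  | Tick _ m' => all_outputs Q m'
  | Unif _ g => forall i, all_outputs Q (g i)
  | Fail => True
  end.

Lemma all_outputsT (A : Type) (m : prog A) : all_outputs (fun=> True) m.
Proof. by elim: m. Qed.

Lemma all_outputs_bind (A B : Type) (Q : A -> Prop) (Q' : B -> Prop)
    (m : prog A) (f : A -> prog B) :
  all_outputs Q m -> (forall a, Q a -> all_outputs Q' (f a)) ->
  all_outputs Q' (bind m f).
Proof.
by elim: m => [a|k m IH|k g IH|] //= Hm Hf; [exact: Hf | move=> i; apply: IH].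
Qed.

Lemma all_outputs_loop (A : Type) (Q : A -> Prop) fuel (body : prog (option A)) :
  all_outputs (fun o => if o is Some a then Q a else True) body ->
  all_outputs Q (loop fuel body).
Proof.
by move=> Hbody; elim: fuel => [|k IH] //=; apply: all_outputs_bind Hbody _ => -[].
Qed.

Lemma all_outputs_unif_seq (X : eqType) (A : Type) (Q : A -> Prop) (s : seq X)
    (f : X -> prog A) :
  (forall x, x \in s -> all_outputs Q (f x)) -> all_outputs Q (unif_seq s f).
Proof. by case: s => [|x0 s] //= Hf i; apply/Hf/mem_nth. Qed.

Lemma pr_eq0_all_outputs (A : Type) (Q : A -> Prop) (E : pred A) (m : prog A) :
  all_outputs Q m -> (forall a, Q a -> ~~ E a) -> pr m E = 0 :> R.
Proof.
move=> + HE; elim: m => [a|k m IH|k g IH|] //= Hm.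
  by rewrite (negbTE (HE a Hm)).
by rewrite big1 ?mulr0 // => i _; apply: IH.
Qed.

Lemma pr_le1 (A : Type) (m : prog A) (E : pred A) : pr m E <= 1 :> R.
Proof.
elim: m => [a|k m IH|k g IH|] //=; first by case: (E a).
rewrite ler_pdivrMl ?ltr0n // mulr1.
apply: le_trans (ler_sum _ (fun i _ => IH i)) _.
by rewrite sumr_const card_ord.
Qed.

Lemma ecost_ge0 (A : Type) (m : prog A) : 0 <= ecost m :> R.
Proof.
elim: m => [a|k m IH|k g IH|] //=; first by rewrite addr_ge0.
by rewrite mulr_ge0 ?invr_ge0 ?sumr_ge0.
Qed.

Lemma ecost_bind (A B : Type) (Q : A -> Prop) (m : prog A) (f : A -> prog B)
    (E : pred A) (b : R) :
  all_outputs Q m -> (forall a, Q a -> ecost (f a) <= b * (E a)%:R) ->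
  ecost (bind m f) <= ecost m + b * pr m E.
Proof.
elim: m => [a|k m IH|k g IH|] /= Hm Hf.
- by rewrite add0r; apply: Hf.
- by rewrite -addrA lerD2l; apply: IH.
- rewrite mulrA [b * _]mulrC -mulrA -mulrDr ler_pM2l ?invr_gt0 ?ltr0n //.
  by rewrite mulr_sumr -big_split /=; apply: ler_sum => i _; apply: IH.
- by rewrite mulr0 addr0.
Qed.

Lemma ecost_bind_le (A B : Type) (Q : A -> Prop) (m : prog A) (f : A -> prog B)
    (b : R) :
  0 <= b -> all_outputs Q m -> (forall a, Q a -> ecost (f a) <= b) ->
  ecost (bind m f) <= ecost m + b.
Proof.
move=> b_ge0 Hm Hf; apply: le_trans (ecost_bind (E := xpredT) (b := b) Hm _) _.
  by move=> a /Hf; rewrite /= mulr1.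
by rewrite lerD2l ler_piMr ?pr_le1.
Qed.

Lemma ecost_loop (A : Type) (body : prog (option A)) (K q : R) fuel :
  0 < q -> ecost body <= K -> pr body (fun o => ~~ isSome o) <= 1 - q ->
  ecost (loop fuel body) <= K / q.
Proof.
move=> q_gt0 HK Hfail; have K_ge0 : 0 <= K := le_trans (ecost_ge0 body) HK.
have Kq_ge0 : 0 <= K / q := divr_ge0 K_ge0 (ltW q_gt0).
elim: fuel => [|k IH] //=.
apply: le_trans (ecost_bind (b := K / q) (E := fun o => ~~ isSome o)
                   (all_outputsT body) _) _.
  by move=> [a|] _ /=; rewrite ?mulr0 ?mulr1.
apply: le_trans (lerD HK (ler_wpM2l Kq_ge0 Hfail)) _.
rewrite mulrBr mulr1 divfK ?gt_eqF //; lra.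
Qed.

Lemma pr_unif_enum (T : finType) (S : {set T}) (A : Type) (f : T -> prog A)
    (E : pred A) :
  S != set0 ->
  pr (unif_seq (enum S) f) E = #|S|%:R^-1 * \sum_(x in S) pr (f x) E :> R.
Proof.
move=> S0; have : enum S != [::] by rewrite -size_eq0 -cardE cards_eq0.
rewrite -big_enum cardE; case: (enum S) => [//|x0 s] _ /=.
by rewrite (big_nth x0) big_mkord.
Qed.

Lemma ecost_unif_enum (T : finType) (S : {set T}) (A : Type) (f : T -> prog A) :
  S != set0 ->
  ecost (unif_seq (enum S) f) = #|S|%:R^-1 * \sum_(x in S) ecost (f x) :> R.
Proof.
move=> S0; have : enum S != [::] by rewrite -size_eq0 -cardE cards_eq0.
rewrite -big_enum cardE; case: (enum S) => [//|x0 s] _ /=.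
by rewrite (big_nth x0) big_mkord.
Qed.

End ProgramLogic.

Lemma expR1_bounds (R : realType) : 9 / 4 <= expR 1 :> R /\ expR 1 < 4 :> R.
Proof.
have e_sqr : expR 1 = expR (2^-1) ^+ 2 :> R.
  by rewrite -expRM_natl; congr expR; field.
have lb : 1 + 2^-1 <= expR (2^-1) :> R by apply: expR_ge1Dx.
have ub : 1 + - 2^-1 < expR (- 2^-1) :> R.
  by apply: expR_gt1Dx; rewrite oppr_eq0 invr_eq0; apply/eqP; lra.
have inv : expR (2^-1) * expR (- 2^-1) = 1 :> R by rewrite -expRD subrr expR0.
have := expR_gt0 (2^-1 : R); rewrite e_sqr; split; nra.
Qed.

(* (4e)^d = 8^d (e/2)^d = lam^3 (e/2)^d, and d >= 1. *)
Lemma cube_le_4e_pow_doubling_dim (R : realType) (lam : nat) : (2 <= lam)%N ->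
  (lam ^ 3)%:R * 9 / 8 <= (4 * expR 1) `^ doubling_dim R lam :> R.
Proof.
move=> lam_ge2; have [e_lb _] := expR1_bounds R.
have ln2_gt0 : 0 < ln (2 : R) by apply: ln_gt0; lra.
have lam_gt0 : 0 < lam%:R :> R by rewrite ltr0n; case: lam lam_ge2.
have ln_lam : ln (2 : R) <= ln lam%:R by rewrite ler_ln ?posrE ?ler_nat //; lra.
rewrite /doubling_dim; set d := ln lam%:R / ln 2.
have d_ge1 : 1 <= d by rewrite /d ler_pdivlMr // mul1r.
have -> : 4 * expR 1 = 8 * (expR 1 / 2) :> R by field.
rewrite powRM; [|lra|lra].
have -> : (8 : R) `^ d = (lam ^ 3)%:R.
  rewrite /powR ifF; last by apply/negbTE; lra.
  have -> : (8 : R) = 2 ^+ 3 by rewrite !exprS expr0; lra.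
  rewrite lnXn; last lra.
  have -> : d * (ln 2 *+ 3) = 3%:R * ln lam%:R by rewrite /d -mulr_natr; field; lra.
  by rewrite expRM_natl lnK ?posrE // natrX.
have : expR 1 / 2 <= (expR 1 / 2) `^ d by rewrite -[X in X <= _]powRr1 ?ler_powR //; lra.
have : 0 <= (lam ^ 3)%:R :> R by [].
nra.
Qed.

Lemma leq_card_bigcup (T I : finType) (P : pred I) (F : I -> {set T}) :
  (#|\bigcup_(i | P i) F i| <= \sum_(i | P i) #|F i|)%N.
Proof.
apply: (big_ind2 (fun (X : {set T}) s => #|X| <= s)%N) => //; first by rewrite cards0.
move=> X1 s1 X2 s2 H1 H2; apply: leq_trans (leq_card_setU X1 X2) (leq_add H1 H2).
Qed.

Lemma head_filter_sort (d : Order.disp_t) (T : orderType d) (x0 : T) (a : pred T)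
    (s : seq T) (r : T) :
  r \in s -> a r ->
  a (head x0 [seq x <- sort <=%O s | a x]) /\
  (head x0 [seq x <- sort <=%O s | a x] <= r)%O.
Proof.
move=> rs ar; have : r \in [seq x <- sort <=%O s | a x] by rewrite mem_filter ar mem_sort.
have : sorted <=%O [seq x <- sort <=%O s | a x].
  by apply/sorted_filter/sort_sorted; [exact: le_trans | exact: le_total].
have : all a [seq x <- sort <=%O s | a x] by apply: filter_all.
case: [seq x <- _ | _] => [//|h t] /= /andP[ah _] sorted_ht.
rewrite in_cons => /predU1P[<- //|rt]; split => //.
exact: (allP (order_path_min le_trans sorted_ht)).
Qed.

Lemma card_rank_lt (d : Order.disp_t) (U : orderType d) (T : finType) (S : {set T})
    (f : T -> U) (m : nat) :
  (minn m #|S| <= #|[set p in S | #|[set x in S | (f x < f p)%O]| < m]|)%N.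
Proof.
set A := [set p in S | _]; rewrite leqNgt; apply/negP => small_A.
have AS : A \subset S by apply/subsetP => x; rewrite inE => /andP[].
have [p0 p0_SA] : exists p0, p0 \in S :\: A.
  by apply/set0Pn; rewrite -card_gt0 cardsDS //; move: small_A; rewrite leq_min; lia.
case: (arg_minP f p0_SA) => p p_SA p_min.
have /setDP[pS /negP] : p \in S :\: A := p_SA; apply; rewrite inE pS /=.
have below_A : [set x in S | (f x < f p)%O] \subset A.
  apply/subsetP => x; rewrite inE => /andP[xS fxp]; apply/negPn/negP => xA.
  have xSA : x \in S :\: A by rewrite inE xA xS.
  by have := p_min x xSA; rewrite leNgt fxp.
apply: leq_ltn_trans (subset_leq_card below_A) _.
by apply: leq_trans small_A (geq_minl _ _).
Qed.

Section Separators.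
Variables (R : realType) (P : finType) (dist : P -> P -> R).

Lemma subset_ball (S : {set P}) (p : P) (r r' : R) : r <= r' ->
  ball dist S p r \subset ball dist S p r'.
Proof.
by move=> le_rr'; apply/subsetP => z; rewrite !inE => /andP[-> /le_trans]; apply.
Qed.

Lemma card_annulus (S : {set P}) (p : P) (r r' : R) : r <= r' ->
  #|annulus dist S p r r'| = (#|ball dist S p r'| - #|ball dist S p r|)%N.
Proof.
move=> le_rr'; rewrite -cardsDS ?subset_ball //; apply: eq_card => z.
by rewrite !inE; case: (z \in S); rewrite //= -ltNge andbC.
Qed.

Lemma doubling_cover_iter (lam : nat) : doubling_ok dist lam ->
  forall k (p : P) (r : R), 0 < r ->
  exists Q : {set P}, (#|Q| <= lam ^ k)%N /\
    ball dist setT p r \subset \bigcup_(q in Q) ball dist setT q (r / 2 ^+ k).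
Proof.
move=> dbl; elim=> [|k IH] p r r_gt0.
  exists [set p]; rewrite cards1 expn0 expr0 divr1; split => //.
  by apply/subsetP => x xb; apply/bigcupP; exists p; rewrite ?set11.
have [Q [card_Q cover_Q]] := IH p r r_gt0.
have rk_gt0 : 0 < r / 2 ^+ k by rewrite divr_gt0 ?exprn_gt0.
pose covers q (Q' : {set P}) := (#|Q'| <= lam)%N &&
  (ball dist setT q (r / 2 ^+ k) \subset
     \bigcup_(q' in Q') ball dist setT q' (r / 2 ^+ k / 2)).
pose cover q := odflt set0 [pick Q' | covers q Q'].
have coverP q : covers q (cover q).
  rewrite /cover; case: pickP => [//|no_cover].
  by have [Q' [h1 h2]] := dbl q _ rk_gt0; move: (no_cover Q'); rewrite /covers h1 h2.
exists (\bigcup_(q in Q) cover q); split.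
  apply: leq_trans (leq_card_bigcup _ _) _; rewrite expnS mulnC.
  apply: (@leq_trans (\sum_(q in Q) lam)%N).
    by apply: leq_sum => q _; case/andP: (coverP q).
  by rewrite sum_nat_const leq_mul.
apply/subsetP => x /(subsetP cover_Q) /bigcupP[q qQ xq].
have /bigcupP[q' q'_cover xq'] := subsetP (proj2 (andP (coverP q))) x xq.
apply/bigcupP; exists q'; first by apply/bigcupP; exists q.
by move: xq'; rewrite exprS [2 * _]mulrC invfM mulrA.
Qed.

Definition sparse_separating_annulus (S : {set P}) (c : R) (t : nat) (pR : P * R)
    : bool :=
  [&& pR.1 \in S, 0 < pR.2,
      #|S|%:R / c <= #|ball dist S pR.1 pR.2|%:R,
      #|annulus dist S pR.1 pR.2 ((1 + t%:R^-1) * pR.2)|%:R <= #|S|%:R / t%:R :> R &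
      #|S|%:R / 2 <= #|S :\: ball dist S pR.1 ((1 + t%:R^-1) * pR.2)|%:R :> R].

Section SparseSepAnn.
Variables (S : {set P}) (t : nat).
Hypothesis t_gt0 : (0 < t)%N.

Local Notation n := #|S|.

Lemma Rseq_homo (R' : R) : 0 <= R' -> {homo Rseq t R' : i j / (i <= j)%N >-> i <= j}.
Proof.
move=> R'_ge0 i j ij; rewrite /Rseq ler_wpM2r // ler_weXn2l //.
by rewrite lerDl invr_ge0.
Qed.

Lemma Rseq_gt0 (R' : R) i : 0 < R' -> 0 < Rseq t R' i.
Proof.
by move=> R'_gt0; rewrite /Rseq mulr_gt0 // exprn_gt0 // ltr_wpDr ?invr_ge0.
Qed.

Lemma RseqS (R' : R) i : Rseq t R' i.+1 = (1 + t%:R^-1) * Rseq t R' i.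
Proof. by rewrite /Rseq exprS mulrA. Qed.

Lemma Rseq_le_e (R' : R) i : 0 <= R' -> (i <= t)%N -> Rseq t R' i <= expR 1 * R'.
Proof.
move=> R'_ge0 it; apply: le_trans (Rseq_homo R'_ge0 it) _.
rewrite /Rseq ler_wpM2r //; apply: (@le_trans _ _ (expR (t%:R^-1) ^+ t)).
  by rewrite lerXn2r ?nnegrE ?expR_ge0 ?addr_ge0 ?invr_ge0 ?expR_ge1Dx.
by rewrite -expRM_natl mulfV ?pnatr_eq0 -?lt0n.
Qed.

Lemma pr_fail_SparseSepAnn_body p (R' : R) : (0 < n)%N -> 0 < R' ->
  #|ball dist S p (expR 1 * R')|%:R <= n%:R / 2 :> R ->
  pr (SparseSepAnn_body dist S n t p R') (fun o => ~~ isSome o) <= 1 - 2^-1 :> R.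
Proof.
move=> n_gt0 R'_gt0 ball_eR; rewrite /SparseSepAnn_body /=.
set a := fun i => #|annulus dist S p (Rseq t R' i) (Rseq t R' i.+1)|%:R : R.
set nt := n%:R / t%:R : R.
have fail_i i : (~~ isSome (if (a i <= nt)%R then Some (p, Rseq t R' i) else None))%:R
    = (nt < a i)%R%:R :> R by rewrite ltNge; case: ifP.
under eq_bigr => i _ do rewrite fail_i.
rewrite -(big_mkord xpredT (fun i => (nt < a i)%R%:R)) prednK //.
set b := fun i => #|ball dist S p (Rseq t R' i)|.
have b_homo : {homo b : i j / (i <= j)%N}.
  by move=> i j ij; apply/subset_leq_card/subset_ball/Rseq_homo; rewrite ?ltW.
have a_eq i : a i = (b i.+1 - b i)%N%:R.
  by rewrite /a card_annulus // RseqS ler_peMl ?(ltW (Rseq_gt0 _ _)) // lerDl invr_ge0.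
have sum_a : \sum_(0 <= i < t) a i <= n%:R / 2.
  under eq_bigr do rewrite a_eq.
  rewrite -natr_sum telescope_sumn //; apply: le_trans ball_eR.
  rewrite ler_nat (leq_trans (leq_subr _ _)) // subset_leq_card // subset_ball //.
  by rewrite Rseq_le_e ?ltW.
have markov : nt * \sum_(0 <= i < t) (nt < a i)%R%:R <= \sum_(0 <= i < t) a i.
  rewrite mulr_sumr; apply: ler_sum => i _.
  by case: ltP => [/ltW|]; rewrite ?mulr1 ?mulr0.
have := le_trans markov sum_a; rewrite /nt -mulrA ler_pM2l ?ltr0n //; lra.
Qed.

Lemma ecost_SparseSepAnn_body p (R' : R) :
  ecost (SparseSepAnn_body dist S n t p R') = n%:R + 1 :> R.
Proof.
rewrite /SparseSepAnn_body /=; under eq_bigr do rewrite addr0.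
rewrite sumr_const card_ord -(mulr_natr n.+1%:R) mulrCA mulVf ?pnatr_eq0 //.
by rewrite mulr1 natr1.
Qed.

Lemma all_outputs_SparseSepAnn fuel (c : R) p (R' : R) : p \in S -> 0 < R' ->
  n%:R / c <= #|ball dist S p R'|%:R ->
  #|ball dist S p (expR 1 * R')|%:R <= n%:R / 2 :> R ->
  all_outputs (sparse_separating_annulus S c t)
    (loop fuel (SparseSepAnn_body dist S n t p R')).
Proof.
move=> pS R'_gt0 big_ball small_eball; apply: all_outputs_loop => j /=.
case: ifP => // small_annulus; rewrite /sparse_separating_annulus /= pS Rseq_gt0 //=.
rewrite -RseqS small_annulus /=; apply/andP; split.
  apply: le_trans big_ball _; rewrite ler_nat subset_leq_card // subset_ball //.
  by have := Rseq_homo (ltW R'_gt0) (leq0n j); rewrite /Rseq expr0 mul1r.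
have ball_sub : ball dist S p (Rseq t R' j.+1) \subset S.
  by apply/subsetP => z; rewrite inE => /andP[].
have small_ball : #|ball dist S p (Rseq t R' j.+1)|%:R <= n%:R / 2 :> R.
  apply: le_trans small_eball; rewrite ler_nat subset_leq_card // subset_ball //.
  by rewrite Rseq_le_e ?(ltW R'_gt0) // -[X in (_ <= X)%N](prednK t_gt0) ltn_ord.
by rewrite cardsDS // natrB ?subset_leq_card //; lra.
Qed.

End SparseSepAnn.

Hypothesis dist_metric : is_metric dist.

Lemma dist_ge0 x y : 0 <= dist x y. Proof. by case: dist_metric. Qed.
Lemma distxx x : dist x x = 0. Proof. by case: dist_metric => _ H _ _; apply/H. Qed.
Lemma distC x y : dist x y = dist y x. Proof. by case: dist_metric. Qed.
Lemma dist_triangle x y z : dist x z <= dist x y + dist y z.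
Proof. by case: dist_metric. Qed.

Lemma dist_gt0 x y : x != y -> 0 < dist x y.
Proof.
move=> /eqP xy; rewrite lt_neqAle dist_ge0 andbT eq_sym; apply/eqP => /eqP d0.
by case: dist_metric => _ H _ _; apply/xy/H/eqP.
Qed.

(* Two points at distance r cannot share a ball of radius r/4. *)
Lemma doubling_ok_ge2 (lam : nat) (x y : P) :
  doubling_ok dist lam -> x != y -> (2 <= lam)%N.
Proof.
move=> dbl xy; have r_gt0 := dist_gt0 xy.
have [Q [card_Q cover_Q]] := doubling_cover_iter dbl 2 x r_gt0.
have /(subsetP cover_Q) /bigcupP[q1 q1Q] : x \in ball dist setT x (dist x y).
  by rewrite inE in_setT distxx ltW.
have /(subsetP cover_Q) /bigcupP[q2 q2Q] : y \in ball dist setT x (dist x y).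
  by rewrite inE in_setT lexx.
rewrite !inE /= (_ : (2 : R) ^+ 2 = 4); last by rewrite !exprS expr0; lra.
move=> yq2 xq1; rewrite leqNgt; apply/negP => lam_lt2.
have /card_le1P /(_ q1 q1Q q2) : (#|Q| <= 1)%N.
  by apply: leq_trans card_Q _; case: (lam) lam_lt2 => [|[|]].
rewrite q2Q inE => /esym/eqP q21; move: yq2; rewrite q21 => yq1.
by have := dist_triangle x q1 y; rewrite (distC x q1); lra.
Qed.

Section SepAnn.
Variables (lam : nat) (S : {set P}) (c : R).
Hypotheses (doubling : doubling_ok dist lam) (c_ge1 : 1 <= c)
  (size_S : c + 1 <= #|S|%:R) (cube_le_c : (lam ^ 3)%:R * 9 / 4 <= c).

Local Notation n := #|S|.
Local Notation sr := (sep_radius dist S n c).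

Let c_gt0 : 0 < c. Proof. by move: c_ge1; lra. Qed.

Let n_gt0 : 0 < n%:R :> R. Proof. by move: size_S c_ge1; lra. Qed.

Let n_over_c_gt1 : 1 < n%:R / c.
Proof. by rewrite ltr_pdivlMr // mul1r; move: size_S; lra. Qed.

Lemma sep_radius_spec x (r : R) : x \in S -> 0 <= r ->
  n%:R / c <= #|ball dist S x r|%:R ->
  [/\ 0 < sr x, n%:R / c <= #|ball dist S x (sr x)|%:R & sr x <= r].
Proof.
move=> xS r_ge0 big_ball; set B := ball dist S x r.
have xB : x \in B by rewrite inE xS distxx.
case: (arg_maxP (dist x) xB) => y yB y_max.
have {}y_max z : z \in B -> dist x z <= dist x y := y_max z.
have /[!inE] /andP[yS yr] : y \in B := yB.
have B_eq : ball dist S x (dist x y) = B.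
  apply/setP => z; rewrite !inE; case zS: (z \in S) => //=.
  apply/idP/idP => [/le_trans /(_ yr) //|zr]; apply: y_max; by rewrite inE zS.
have : (1 < #|B|)%N by rewrite -(ltr_nat R); apply: lt_le_trans big_ball.
case/card_gt1P => z1 [z2 [z1B z2B z12]].
have [z zB zx] : exists2 z, z \in B & z != x.
  by case: (eqVneq z1 x) => [z1x|]; [exists z2; rewrite // -z1x eq_sym | exists z1].
have dxy_gt0 : 0 < dist x y.
  by apply: lt_le_trans (dist_gt0 _) (y_max _ zB); rewrite eq_sym.
have y_enum : y \in enum S by rewrite mem_enum.
have [|/andP[? ?] le_y] := head_filter_sort 0
  (a := fun r => (0 < r) && (n%:R / c <= #|ball dist S x r|%:R)) (map_f (dist x) y_enum).
  by rewrite /= dxy_gt0 B_eq big_ball.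
by split=> //; apply: le_trans le_y yr.
Qed.

Lemma sep_radius_ball x : x \in S ->
  0 < sr x /\ n%:R / c <= #|ball dist S x (sr x)|%:R.
Proof.
move=> xS; set r := \sum_(z in S) dist x z.
have ball_r : ball dist S x r = S.
  apply/setP => z; rewrite inE; case zS: (z \in S) => //=.
  by rewrite /r (bigD1 z) //= lerDl sumr_ge0 // => w _; apply: dist_ge0.
have r_ge0 : 0 <= r by apply: sumr_ge0 => z _; apply: dist_ge0.
have big_ball : n%:R / c <= #|ball dist S x r|%:R.
  by rewrite ball_r ler_pdivrMr // ler_peMr.
by have [] := sep_radius_spec xS r_ge0 big_ball.
Qed.

Lemma sep_radius_le_heavy q x (rho : R) : x \in S -> dist q x <= rho ->
  n%:R / c <= #|ball dist S q rho|%:R -> sr x <= 2 * rho.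
Proof.
move=> xS xq heavy; have rho_ge0 : 0 <= rho := le_trans (dist_ge0 _ _) xq.
suff /subset_leq_card : ball dist S q rho \subset ball dist S x (2 * rho).
  rewrite -(ler_nat R) => sub; have two_rho_ge0 : 0 <= 2 * rho by rewrite mulr_ge0.
  by have [] := sep_radius_spec xS two_rho_ge0 (le_trans heavy sub).
apply/subsetP => z; rewrite !inE => /andP[-> zq] /=.
by apply: le_trans (dist_triangle x q z) _; rewrite distC; lra.
Qed.

Lemma card_ball_sep_radius_le p (mu : R) : p \in S -> 0 < mu < 4 ->
  #|ball dist S p (mu * sr p)|%:R
    <= #|[set x in S | sr x < sr p]|%:R + (lam ^ 3)%:R * (n%:R / c).
Proof.
move=> pS /andP[mu_gt0 mu_lt4]; have [rp_gt0 _] := sep_radius_ball pS.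
have [Q [card_Q cover_Q]] := doubling_cover_iter doubling 3 p (mulr_gt0 mu_gt0 rp_gt0).
set rho := mu * sr p / 2 ^+ 3.
have rho_eq : rho = mu * sr p / 8 by rewrite /rho !exprS expr0; congr (_ / _); lra.
pose heavy q := n%:R / c <= #|ball dist S q rho|%:R.
set U := [set x in S | sr x < sr p].
set V := \bigcup_(q in Q | ~~ heavy q) ball dist S q rho.
have sub_UV : ball dist S p (mu * sr p) \subset U :|: V.
  apply/subsetP => x; rewrite inE => /andP[xS xp].
  have /(subsetP cover_Q) /bigcupP[q qQ] : x \in ball dist setT p (mu * sr p).
    by rewrite inE in_setT xp.
  rewrite inE in_setT /= -/rho => xq; rewrite inE; apply/orP; case hq: (heavy q).
    left; rewrite inE xS; apply: le_lt_trans (sep_radius_le_heavy xS xq hq) _.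
    by rewrite rho_eq; move: mu_lt4 rp_gt0; nra.
  by right; apply/bigcupP; exists q; rewrite ?qQ ?hq // inE xS.
have card_V : #|V|%:R <= (lam ^ 3)%:R * (n%:R / c) :> R.
  apply: le_trans (_ : (\sum_(q in Q | ~~ heavy q) #|ball dist S q rho|)%:R <= _).
    by rewrite ler_nat leq_card_bigcup.
  rewrite natr_sum; apply: le_trans (_ : \sum_(q in Q | ~~ heavy q) n%:R / c <= _).
    by apply: ler_sum => q /andP[_]; rewrite /heavy -ltNge => /ltW.
  rewrite sumr_const -[_ / c *+ _]mulr_natl; apply: ler_wpM2r.
    by rewrite divr_ge0 // ltW.
  rewrite ler_nat; apply: leq_trans card_Q.
  by apply/subset_leq_card/subsetP => q /andP[].
have := leq_trans (subset_leq_card sub_UV) (leq_card_setU U V).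
by rewrite -(ler_nat R) natrD => /le_trans; apply; rewrite lerD2l.
Qed.

Lemma card_sep_good :
  (n <= 18 * #|[set p in S | #|ball dist S p (expR 1 * sr p)|%:R <= n%:R / 2 :> R]|)%N.
Proof.
have [e_lb e_ub] := expR1_bounds R.
have cube_ratio : (lam ^ 3)%:R * (n%:R / c) <= 4 / 9 * n%:R.
  rewrite mulrCA mulrC ler_pM2r // ler_pdivrMr //; move: cube_le_c; lra.
have few := card_rank_lt S sr (n %/ 18 + 1).
set A := [set p in S | _] in few; set G := [set p in S | _].
have AG : A \subset G.
  apply/subsetP => p; rewrite !inE => /andP[pS rank_p]; rewrite pS /=.
  have := @card_ball_sep_radius_le p (expR 1) pS; rewrite expR_gt0 /= => /(_ e_ub).
  have : (18 * #|[set x in S | (sr x < sr p)%R]| <= n)%N.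
    by move: rank_p; rewrite addn1 ltnS leq_divRL // mulnC.
  rewrite -(ler_nat R) natrM; lra.
by have := subset_leq_card AG; move: few; rewrite /minn; case: ltnP; lia.
Qed.

Let S_neq0 : S != set0. Proof. by rewrite -card_gt0 -(ltr_nat R). Qed.

Lemma ecost_SepAnn_body mu :
  ecost (SepAnn_body dist S n mu c) = (3 * n%:R + 1) :> R.
Proof.
rewrite ecost_unif_enum //=; under eq_bigr do rewrite addr0.
rewrite sumr_const -(mulr_natr (3 * n).+1%:R) mulrCA mulVf ?gt_eqF // mulr1.
by rewrite -natr1 natrM.
Qed.

Lemma pr_fail_SepAnn_body :
  pr (SepAnn_body dist S n (expR 1) c) (fun o => ~~ isSome o) <= 1 - 18^-1 :> R.
Proof.
have := card_sep_good; set G := [set p in S | _] => card_G.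
have GS : G \subset S by apply/subsetP => x; rewrite inE => /andP[].
rewrite pr_unif_enum // (big_setID G) /= (setIidPr GS) big1 ?add0r; last first.
  by move=> x; rewrite inE => /andP[_ ->].
rewrite (eq_bigr (fun=> 1)) => [|x /setDP[xS]]; last first.
  by rewrite inE xS /= => /negbTE ->.
rewrite sumr_const cardsDS // natrB ?subset_leq_card // mulrBr mulVf ?gt_eqF //.
rewrite lerD2l lerN2 mulrC ler_pdivlMr //.
by move: card_G; rewrite -(ler_nat R) natrM; lra.
Qed.

Lemma all_outputs_SepAnn fuel :
  all_outputs (fun pR : P * R => [/\ pR.1 \in S, 0 < pR.2,
      n%:R / c <= #|ball dist S pR.1 pR.2|%:R &
      #|ball dist S pR.1 (expR 1 * pR.2)|%:R <= n%:R / 2 :> R])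
    (SepAnn dist fuel S n (expR 1) c).
Proof.
apply/all_outputs_loop/all_outputs_unif_seq => p; rewrite mem_enum => pS /=.
by have [? ?] := sep_radius_ball pS; case: ifP.
Qed.

Lemma ecost_SepAnn fuel :
  ecost (SepAnn dist fuel S n (expR 1) c) <= 18 * (3 * n%:R + 1) :> R.
Proof.
rewrite mulrC -[18 : R]invrK; apply: ecost_loop.
- by rewrite invr_gt0.
- by rewrite ecost_SepAnn_body.
- exact: pr_fail_SepAnn_body.
Qed.

Lemma ecost_SepAnn_SparseSepAnn t fuel : (0 < t)%N ->
  ecost (bind (SepAnn dist fuel S n (expR 1) c)
              (fun pR => loop fuel (SparseSepAnn_body dist S n t pR.1 pR.2)))
    <= 18 * (3 * n%:R + 1) + 2 * (n%:R + 1) :> R.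
Proof.
move=> t_gt0.
apply: le_trans (ecost_bind_le (b := 2 * (n%:R + 1)) _ (all_outputs_SepAnn fuel) _) _.
- by rewrite mulr_ge0 // addr_ge0.
- move=> [p R'] [_ R'_gt0 _ small_eball] /=.
  rewrite mulrC -[2 : R]invrK; apply: ecost_loop.
  + by rewrite invr_gt0.
  + by rewrite ecost_SparseSepAnn_body.
  + by apply: pr_fail_SparseSepAnn_body; rewrite // -(ltr_nat R).
- by rewrite lerD2r ecost_SepAnn.
Qed.

Lemma all_outputs_SepAnn_SparseSepAnn t fuel : (0 < t)%N ->
  all_outputs (sparse_separating_annulus S c t)
    (bind (SepAnn dist fuel S n (expR 1) c)
          (fun pR => loop fuel (SparseSepAnn_body dist S n t pR.1 pR.2))).
Proof.
move=> t_gt0; apply: all_outputs_bind (all_outputs_SepAnn fuel) _ => -[p R'] /=.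
by case=> *; apply: all_outputs_SparseSepAnn.
Qed.

End SepAnn.

End Separators.

Theorem lemma4 (R : realType) :
  exists C : R, 0 < C /\
  forall (P : finType) (dist : P -> P -> R) (lam : nat) (d : R)
         (S : {set P}) (n t : nat),
    is_metric dist ->
    doubling_constant dist lam ->
    d = doubling_dim R lam ->
    S != set0 ->
    n = #|S| ->
    (1 <= t)%N ->
    let c := 2 * (4 * expR 1) `^ d in
    c + 1 <= n%:R ->
    (* expected running time O(c n), uniformly in the fuel *)
    (forall fuel, ecost (SparseSepAnn dist fuel S n d t) <= C * c * n%:R) /\
    (* every possible output (p, R) satisfies p in S, R > 0 and (1)-(3) *)
    (forall fuel,
       pr (SparseSepAnn dist fuel S n d t)
          (fun pR => ~~ [&& pR.1 \in S, 0 < pR.2,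
               n%:R / c <= #|ball dist S pR.1 pR.2|%:R :> R,
               #|annulus dist S pR.1 pR.2 ((1 + t%:R^-1) * pR.2)|%:R
                 <= n%:R / t%:R :> R &
               n%:R / 2 <= #|S :\: ball dist S pR.1 ((1 + t%:R^-1) * pR.2)|%:R :> R])
       = 0 :> R).
Proof.
exists 100; split=> [|P dist lam d S n t metric [doubling _] -> _ -> t_gt0 c size_S].
  by lra.
have c_gt0 : 0 < c by rewrite mulr_gt0 // powR_gt0 // mulr_gt0 // expR_gt0.
have [x [y [_ _ xy]]] : exists x y, [/\ x \in S, y \in S & x != y].
  by apply/card_gt1P; rewrite -(ltr_nat R); lra.
have lam_ge2 := doubling_ok_ge2 metric doubling xy.
have cube_ge1 : 1 <= (lam ^ 3)%:R :> R by rewrite ler1n expn_gt0 (leq_trans _ lam_ge2).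
have cube_le_c : (lam ^ 3)%:R * 9 / 4 <= c.
  by have := cube_le_4e_pow_doubling_dim R lam_ge2; rewrite /c; lra.
have c_ge1 : 1 <= c by lra.
split=> fuel; rewrite /SparseSepAnn /= -/c.
  have := ecost_SepAnn_SparseSepAnn metric doubling c_ge1 size_S cube_le_c fuel t_gt0.
  nra.
have := all_outputs_SepAnn_SparseSepAnn metric c_ge1 size_S fuel t_gt0.
by move/pr_eq0_all_outputs; apply=> pR; rewrite negbK.
Qed.
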